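(* Let $n \geq 2$, let $(x_1,\dots,x_{n+1})$ be the standard coordinates on $\mathbb{R}^{n+1}_1$, and let $F:\mathbb{R}^{n+1}\to\mathbb{R}^{n+1}$, $(y_1,\dots,y_{n+1}) = F(x_1,\dots,x_{n+1})$, be a smooth diffeomorphism, so that $(y_1,\dots,y_{n+1})$ is another (global) coordinate system on $\mathbb{R}^{n+1}_1$. Assume that for every smooth function $\varphi$ on $\mathbb{R}^{n+1}$, $$\sum_{i=1}^n \frac{\partial^2 \varphi}{\partial x_i^2} - \frac{\partial^2 \varphi}{\partial x_{n+1}^2} = 0 \ \text{ everywhere} \iff \sum_{i=1}^n \frac{\partial^2 \varphi}{\partial y_i^2} - \frac{\partial^2 \varphi}{\partial y_{n+1}^2} = 0 \ \text{ everywhere},$$ where in the right-hand side $\varphi$ is expressed in the $y$-coordinates (i.e. one considers $\varphi\circ F^{-1}$ as a function of $y$). For $i=1,\dots,n+1$ let $r_i = \big(\frac{\partial y_i}{\partial x_1},\dots,\frac{\partial y_i}{\partial x_{n+1}}\big)$ be the $i$-th row of the Jacobian matrix $\big(\frac{\partial y_i}{\partial x_j}\big)$. Then at every point: the rows are mutually orthogonal with respect to the Minkowski inner product, i.e. $\langle r_i, r_j\rangle = 0$ for $i \neq j$; they all have the same length, namely $\langle r_i,r_i\rangle = -\langle r_{n+1},r_{n+1}\rangle$ for $1\le i\le n$; and $r_1,\dots,r_n$ are spacelike while $r_{n+1}$ is timelike.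
   Context: $\mathbb{R}^{n+1}_1$ denotes $\mathbb{R}^{n+1}$ with the Minkowski inner product of signature $(+,\dots,+,-)$: $\langle u,v\rangle = \sum_{i=1}^n u_i v_i - u_{n+1}v_{n+1}$. A vector $v$ is spacelike if $\langle v,v\rangle>0$ (or $v=0$), timelike if $\langle v,v\rangle<0$, null if $\langle v,v\rangle = 0$, $v\neq 0$. *)

From Stdlib Require Import Reals.
From mathcomp Require Import ssreflect ssrfun ssrbool eqtype ssrnat fintype.
Set Implicit Arguments. Unset Strict Implicit.
Open Scope R_scope.

(* Points of R^N, coordinates indexed by 'I_N (index k corresponds to x_{k+1}). *)
Definition Pt (N : nat) := 'I_N -> R.

Fixpoint sumR (m : nat) (f : nat -> R) : R :=
  match m with O => 0 | S m' => sumR m' f + f m' end.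

Definition shift N (x : Pt N) (i : 'I_N) (t : R) : Pt N :=
  fun k => if k == i then x k + t else x k.

Definition is_partial N (f : Pt N -> R) (i : 'I_N) (g : Pt N -> R) : Prop :=
  forall x, derivable_pt_lim (fun t => f (shift x i t)) 0 (g x).

Definition contN N (f : Pt N -> R) : Prop :=
  forall x eps, 0 < eps -> exists delta, 0 < delta /\
    forall y, (forall k, Rabs (y k - x k) < delta) -> Rabs (f y - f x) < eps.

Fixpoint Ck N (k : nat) (f : Pt N -> R) : Prop :=
  match k with
  | O => contN f
  | S k' => contN f /\ forall i, exists g, is_partial f i g /\ Ck k' g
  end.

Definition smooth N (f : Pt N -> R) : Prop := forall k, Ck k f.

Definition smooth_map N (F : Pt N -> Pt N) : Prop :=
  forall i, smooth (fun x => F x i).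

Definition diffeo_with_inv N (F G : Pt N -> Pt N) : Prop :=
  smooth_map F /\ smooth_map G /\ (forall x, G (F x) = x) /\ (forall y, F (G y) = y).

Definition wave_zero (n : nat) (phi : Pt n.+1 -> R) : Prop :=
  forall (g h : 'I_n.+1 -> Pt n.+1 -> R),
    (forall i, is_partial phi i (g i)) ->
    (forall i, is_partial (g i) i (h i)) ->
    forall x, sumR n (fun k => h (inord k) x) - h ord_max x = 0.

Definition mink (n : nat) (u v : Pt n.+1) : R :=
  sumR n (fun k => u (inord k) * v (inord k)) - u ord_max * v ord_max.

Definition spacelike n (v : Pt n.+1) : Prop := mink v v > 0 \/ v = (fun _ => 0).
Definition timelike n (v : Pt n.+1) : Prop := mink v v < 0.

(* Each new coordinate y_a, being a coordinate function in y, solves the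
   wave equation, hence so does y_a(x).  By the Leibniz rule
   box(fg) = g box f + f box g + 2 <grad f, grad g>, for such solutions the
   function y_a y_b + y_c y_d solves the wave equation iff
   <grad y_a, grad y_b> + <grad y_c, grad y_d> = 0.  In the y coordinates this is
   the relation <e_a, e_b> + <e_c, e_d> = 0 between basis vectors, so the same
   relation holds for the rows r_a of the Jacobian: this gives orthogonality and
   equal lengths <r_i, r_i> = -<r_{n+1}, r_{n+1}>.  If r_{n+1} were not timelike,
   two spatial rows would be orthogonal of equal nonpositive square, hence
   linearly dependent; but distinct rows of the Jacobian of a diffeomorphism are
   independent, which we prove with a chain rule at points where all partial
   derivatives vanish. *)
From Stdlib Require Import Reals Lra Psatz FunctionalExtensionality IndefiniteDescription.
From mathcomp Require Import ssreflect ssrfun ssrbool eqtype ssrnat fintype.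
Open Scope R_scope.
Set Implicit Arguments. Unset Strict Implicit.

Lemma sumR_ext m f g : (forall k, (k < m)%N -> f k = g k) -> sumR m f = sumR m g.
Proof.
  elim: m => [|m IH] //= efg.
  rewrite IH ?efg // => k hk; apply: efg; exact: ltn_trans hk _.
Qed.

Lemma sumR_plus m f g : sumR m (fun k => f k + g k) = sumR m f + sumR m g.
Proof. elim: m => [|m IH] /=; [ring | rewrite IH; ring]. Qed.

Lemma sumR_zero m : sumR m (fun _ => 0) = 0.
Proof. elim: m => [|m IH] //=; rewrite IH; ring. Qed.

Lemma sumR_nonneg m f : (forall k, (k < m)%N -> 0 <= f k) -> 0 <= sumR m f.
Proof.
  elim: m => [|m IH] f_ge0 /=; first lra.
  have := IH (fun k hk => f_ge0 k (ltn_trans hk (ltnSn m))).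
  have := f_ge0 m (ltnSn m); lra.
Qed.

Lemma sumR_nonneg_eq0 m f : (forall k, (k < m)%N -> 0 <= f k) -> sumR m f = 0 ->
  forall k, (k < m)%N -> f k = 0.
Proof.
  elim: m => [|m IH] f_ge0 //= sum0 k.
  have f_ge0' : forall k, (k < m)%N -> 0 <= f k.
    by move=> k' hk'; apply: f_ge0; exact: ltn_trans hk' _.
  have := sumR_nonneg f_ge0'; have := f_ge0 m (ltnSn m) => fm_ge0 sum_ge0.
  rewrite ltnS leq_eqVlt => /orP [/eqP -> | hk]; first lra.
  apply: IH => //; lra.
Qed.

Definition basis_vec N (a : 'I_N) : Pt N := fun k => if k == a then 1 else 0.

Lemma mink_comb2 n (a b : Pt n.+1) u0 u1 :
  mink (fun j => u0 * a j + u1 * b j) (fun j => u0 * a j + u1 * b j) =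
  u0 * u0 * mink a a + 2 * u0 * u1 * mink a b + u1 * u1 * mink b b.
Proof.
  rewrite /mink.
  have -> : forall m, sumR m (fun k => (u0 * a (inord k) + u1 * b (inord k)) *
                                        (u0 * a (inord k) + u1 * b (inord k))) =
    u0 * u0 * sumR m (fun k => a (inord k) * a (inord k)) +
    2 * u0 * u1 * sumR m (fun k => a (inord k) * b (inord k)) +
    u1 * u1 * sumR m (fun k => b (inord k) * b (inord k)).
    by elim => [|m IH] /=; [ring | rewrite IH; ring].
  ring.
Qed.

Lemma val_inord_lt n k : (k < n)%N -> (@inord n k : nat) = k.
Proof. move=> hk; rewrite inordK //; exact: ltn_trans hk (ltnSn n). Qed.

Lemma mink_basis_neq n (a b : 'I_n.+1) : a != b -> mink (basis_vec a) (basis_vec b) = 0.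
Proof.
  move=> ab; have prod0 : forall k, basis_vec a k * basis_vec b k = 0.
  { move=> k; rewrite /basis_vec; case: (eqVneq k a) => [->|_]; last ring.
    rewrite (negbTE ab); ring. }
  rewrite /mink (sumR_ext (g := fun _ => 0)) ?sumR_zero ?prod0; [ring | by []].
Qed.

Lemma mink_basis_space n (a : 'I_n.+1) : (a < n)%N -> mink (basis_vec a) (basis_vec a) = 1.
Proof.
  move=> ha; rewrite /mink.
  have partial_sum : forall m, (m <= n)%N ->
      sumR m (fun k => basis_vec a (inord k) * basis_vec a (inord k)) = if (a < m)%N then 1 else 0.
  { elim => [|m IH] hm //=; rewrite IH ?(ltnW hm) // /basis_vec.
    have -> : (@inord n m == a) = (m == a).
      by apply/eqP/eqP => [<-|->]; [rewrite val_inord_lt | apply/val_inj; rewrite /= val_inord_lt].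
    by rewrite ltnS; case: ltngtP => /= _; ring. }
  rewrite partial_sum // ha /basis_vec.
  have -> : (@ord_max n == a) = false by apply/negbTE/eqP => e; rewrite -e ltnn in ha.
  ring.
Qed.

Lemma mink_basis_time n : mink (basis_vec (@ord_max n)) (basis_vec ord_max) = -1.
Proof.
  rewrite /mink (sumR_ext (g := fun _ => 0)) ?sumR_zero /basis_vec ?eqxx; first ring.
  move=> k hk; have -> : (@inord n k == ord_max) = false; last ring.
  by apply/negbTE/eqP => /(congr1 val) /=; rewrite val_inord_lt // => e; rewrite e ltnn in hk.
Qed.

Lemma spatial_mink_nonneg n (w : Pt n.+1) : w ord_max = 0 -> 0 <= mink w w.
Proof.
  move=> w_t; rewrite /mink w_t Rmult_0_l Rminus_0_r.
  apply: sumR_nonneg => k _; exact: Rle_0_sqr.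
Qed.

Lemma spatial_null n (w : Pt n.+1) : w ord_max = 0 -> mink w w = 0 -> forall j, w j = 0.
Proof.
  move=> w_t; rewrite /mink w_t Rmult_0_l Rminus_0_r => sum0 j.
  case: (ltnP j n) => hj.
  - have := sumR_nonneg_eq0 (fun k _ => Rle_0_sqr (w (inord k))) sum0 hj.
    have -> : (@inord n j) = j by apply/val_inj; rewrite /= val_inord_lt.
    by case/Rmult_integral.
  - have -> : j = ord_max by apply/val_inj/eqP; rewrite eqn_leq hj -ltnS ltn_ord.
    exact: w_t.
Qed.

(* Two mutually orthogonal vectors of the same nonpositive Minkowski square are
   linearly dependent: a combination killing the time component is spacelike
   or null and of nonpositive square, hence zero. *)
Lemma orth_pair_dependent n (a b : Pt n.+1) m :
  mink a b = 0 -> mink a a = m -> mink b b = m -> m <= 0 ->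
  exists u0 u1, (u0 <> 0 \/ u1 <> 0) /\ forall j, u0 * a j + u1 * b j = 0.
Proof.
  move=> ab aa bb m_le0.
  have [u0 [u1 [u_nz kill_t]]] : exists u0 u1, (u0 <> 0 \/ u1 <> 0) /\
      u0 * a ord_max + u1 * b ord_max = 0.
  { case: (Req_dec (a ord_max) 0) => a_t.
    - by exists 1, 0; split; [left; lra | rewrite a_t; ring].
    - by exists (b ord_max), (- a ord_max); split; [right; lra | ring]. }
  exists u0, u1; split => //.
  have u_pos : 0 < u0 * u0 + u1 * u1.
    by case: u_nz => h; have := Rsqr_pos_lt _ h; have := Rle_0_sqr u0;
       have := Rle_0_sqr u1; rewrite /Rsqr; lra.
  have w_sq := mink_comb2 a b u0 u1; rewrite ab aa bb in w_sq.
  have w_ge0 := @spatial_mink_nonneg _ (fun j => u0 * a j + u1 * b j) kill_t.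
  apply: (@spatial_null _ (fun j => u0 * a j + u1 * b j)) => //; nra.
Qed.

Lemma two_spatial_indices n : (2 <= n)%N ->
  exists i0 i1 : 'I_n.+1, [/\ i0 != i1, (i0 < n)%N & (i1 < n)%N].
Proof.
  move=> hn; exists (inord 0), (inord 1).
  rewrite !val_inord_lt //; last exact: ltn_trans hn.
  split=> //; last exact: ltn_trans hn.
  by apply/negP => /eqP /(congr1 val); rewrite /= !val_inord_lt //; apply: ltn_trans hn.
Qed.

Lemma shift0 N (x : Pt N) i : shift x i 0 = x.
Proof. apply: functional_extensionality => k; rewrite /shift; case: (k == i) => //; lra. Qed.

Lemma shift_shift N (x : Pt N) i a b : shift (shift x i a) i b = shift x i (a + b).
Proof. apply: functional_extensionality => k; rewrite /shift; case: (k == i) => //; lra. Qed.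

(* [is_partial] only speaks of derivatives at t = 0; by translation invariance
   it gives the derivative along the whole coordinate line. *)
Lemma is_partial_at N (f : Pt N -> R) i g : is_partial f i g ->
  forall x t, derivable_pt_lim (fun s => f (shift x i s)) t (g (shift x i t)).
Proof.
  move=> df x t eps eps_gt0.
  have [d Hd] := df (shift x i t) eps eps_gt0; exists d => h h_nz h_lt.
  by have := Hd h h_nz h_lt; rewrite !shift_shift Rplus_0_r Rplus_0_l.
Qed.

Lemma is_partial_uniq N (f : Pt N -> R) i g1 g2 :
  is_partial f i g1 -> is_partial f i g2 -> g1 = g2.
Proof.
  move=> d1 d2; apply: functional_extensionality => x.
  exact: uniqueness_limite (d1 x) (d2 x).
Qed.

Lemma is_partial_const N (c : R) i : is_partial (fun _ : Pt N => c) i (fun _ => 0).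
Proof. move=> x; exact: derivable_pt_lim_const. Qed.

Lemma is_partial_plus N (f g : Pt N -> R) i f' g' :
  is_partial f i f' -> is_partial g i g' ->
  is_partial (fun x => f x + g x) i (fun x => f' x + g' x).
Proof. move=> df dg x; exact: derivable_pt_lim_plus (df x) (dg x). Qed.

Lemma is_partial_mult N (f g : Pt N -> R) i f' g' :
  is_partial f i f' -> is_partial g i g' ->
  is_partial (fun x => f x * g x) i (fun x => f' x * g x + f x * g' x).
Proof.
  move=> df dg x; have := derivable_pt_lim_mult _ _ _ _ _ (df x) (dg x).
  by rewrite /mult_fct /= !shift0.
Qed.

Lemma is_partial_scal N (f : Pt N -> R) i f' c :
  is_partial f i f' -> is_partial (fun x => c * f x) i (fun x => c * f' x).
Proof. move=> df x; exact: derivable_pt_lim_scal (df x). Qed.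

Lemma is_partial_proj N (a i : 'I_N) :
  is_partial (fun y : Pt N => y a) i (fun _ => basis_vec a i).
Proof.
  move=> x; rewrite /shift /basis_vec eq_sym; case: (i == a).
  - have := derivable_pt_lim_plus _ _ 0 _ _ (derivable_pt_lim_const (x a) 0)
              (derivable_pt_lim_id 0).
    by rewrite Rplus_0_l.
  - exact: derivable_pt_lim_const.
Qed.

Lemma contN_const N (c : R) : contN (fun _ : Pt N => c).
Proof. move=> x e e_gt0; exists 1; split=> [|y _]; rewrite ?Rminus_diag ?Rabs_R0; lra. Qed.

Lemma contN_plus N (f g : Pt N -> R) : contN f -> contN g -> contN (fun x => f x + g x).
Proof.
  move=> cf cg x e e_gt0.
  have [d1 [d1_gt0 H1]] := cf x (e / 2) ltac:(lra).
  have [d2 [d2_gt0 H2]] := cg x (e / 2) ltac:(lra).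
  exists (Rmin d1 d2); split; first exact: Rmin_pos.
  move=> y near_y.
  have := H1 y (fun k => Rlt_le_trans _ _ _ (near_y k) (Rmin_l _ _)).
  have := H2 y (fun k => Rlt_le_trans _ _ _ (near_y k) (Rmin_r _ _)).
  have := Rabs_triang (f y - f x) (g y - g x).
  have -> : f y - f x + (g y - g x) = f y + g y - (f x + g x) by ring.
  lra.
Qed.

Lemma contN_mult N (f g : Pt N -> R) : contN f -> contN g -> contN (fun x => f x * g x).
Proof.
  move=> cf cg x e e_gt0.
  set A := Rabs (f x) + 1; set B := Rabs (g x) + 1.
  have A_gt0 : 0 < A by have := Rabs_pos (f x); rewrite /A; lra.
  have B_gt0 : 0 < B by have := Rabs_pos (g x); rewrite /B; lra.
  have ef_gt0 : 0 < e / (2 * B) by apply: Rdiv_lt_0_compat; lra.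
  have eg_gt0 : 0 < Rmin 1 (e / (2 * A)) by apply: Rmin_pos; [lra | apply: Rdiv_lt_0_compat; lra].
  have [d1 [d1_gt0 H1]] := cf x _ ef_gt0.
  have [d2 [d2_gt0 H2]] := cg x _ eg_gt0.
  exists (Rmin d1 d2); split; first exact: Rmin_pos.
  move=> y near_y.
  have df := H1 y (fun k => Rlt_le_trans _ _ _ (near_y k) (Rmin_l _ _)).
  have dg := H2 y (fun k => Rlt_le_trans _ _ _ (near_y k) (Rmin_r _ _)).
  have dg1 := Rlt_le_trans _ _ _ dg (Rmin_l _ _).
  have dgA := Rlt_le_trans _ _ _ dg (Rmin_r _ _).
  (* |g y| <= B, so |f y - f x| |g y| < e/2 and |f x| |g y - g x| <= e/2 *)
  have gy_le : Rabs (g y) <= B.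
  { have := Rabs_triang (g x) (g y - g x).
    have -> : g x + (g y - g x) = g y by ring.
    rewrite /B; lra. }
  have term1 : Rabs (f y - f x) * Rabs (g y) < e / 2.
  { have -> : e / 2 = e / (2 * B) * B by field; lra.
    apply: (Rle_lt_trans _ (Rabs (f y - f x) * B)).
    - exact: Rmult_le_compat_l (Rabs_pos _) gy_le.
    - exact: Rmult_lt_compat_r. }
  have term2 : Rabs (f x) * Rabs (g y - g x) <= e / 2.
  { have -> : e / 2 = A * (e / (2 * A)) by field; lra.
    apply: Rmult_le_compat; [exact: Rabs_pos | exact: Rabs_pos | rewrite /A; lra | lra]. }
  have := Rabs_triang ((f y - f x) * g y) (f x * (g y - g x)).
  rewrite !Rabs_mult.
  have -> : (f y - f x) * g y + f x * (g y - g x) = f y * g y - f x * g x by ring.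
  lra.
Qed.

Lemma Ck_mono N k (f : Pt N -> R) : Ck k.+1 f -> Ck k f.
Proof.
  elim: k f => [|k IH] f /=; first by case.
  move=> [cf df]; split=> // i; have [g [dfg Cg]] := df i.
  by exists g; split=> //; apply: IH.
Qed.

Lemma Ck_plus N k (f g : Pt N -> R) : Ck k f -> Ck k g -> Ck k (fun x => f x + g x).
Proof.
  elim: k f g => [|k IH] f g /=; first exact: contN_plus.
  move=> [cf df] [cg dg]; split=> [|i]; first exact: contN_plus.
  have [f' [df' Cf']] := df i; have [g' [dg' Cg']] := dg i.
  by exists (fun x => f' x + g' x); split; [exact: is_partial_plus | exact: IH].
Qed.

Lemma Ck_mult N k (f g : Pt N -> R) : Ck k f -> Ck k g -> Ck k (fun x => f x * g x).
Proof.
  elim: k f g => [|k IH] f g /=; first exact: contN_mult.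
  move=> [cf df] [cg dg]; split=> [|i]; first exact: contN_mult.
  have [f' [df' Cf']] := df i; have [g' [dg' Cg']] := dg i.
  exists (fun x => f' x * g x + f x * g' x); split; first exact: is_partial_mult.
  by apply: Ck_plus; apply: IH => //; apply: Ck_mono; split.
Qed.

Lemma smooth_plus N (f g : Pt N -> R) : smooth f -> smooth g -> smooth (fun x => f x + g x).
Proof. by move=> sf sg k; apply: Ck_plus. Qed.

Lemma smooth_mult N (f g : Pt N -> R) : smooth f -> smooth g -> smooth (fun x => f x * g x).
Proof. by move=> sf sg k; apply: Ck_mult. Qed.

Lemma C2_partial N (f : Pt N -> R) i g : Ck 2 f -> is_partial f i g ->
  contN g /\ exists h, is_partial g i h.
Proof.
  move=> [_ df] dfg; have [g' [dfg' [cg' dg']]] := df i.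
  have <- := is_partial_uniq dfg' dfg; split=> //.
  by have [h [dgh _]] := dg' i; exists h.
Qed.

Lemma fin_min N (P : 'I_N -> R -> Prop) :
  (forall k d d', P k d -> 0 < d' <= d -> P k d') ->
  (forall k, exists d, 0 < d /\ P k d) -> exists d, 0 < d /\ forall k, P k d.
Proof.
  move=> P_mono P_ex.
  suff /(_ N) [d [d_gt0 Pd]] : forall m, exists d, 0 < d /\ forall k : 'I_N, (k < m)%N -> P k d.
    by exists d; split=> // k; apply: Pd.
  elim=> [|m [d [d_gt0 Pd]]]; first by exists 1; split=> //; lra.
  case: (ltnP m N) => hm; last first.
    by exists d; split=> // k hk; apply: Pd; exact: leq_trans (ltn_ord k) hm.
  have [d' [d'_gt0 Pd']] := P_ex (Ordinal hm).
  have dd'_gt0 := Rmin_pos _ _ d_gt0 d'_gt0.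
  exists (Rmin d d'); split=> // k; rewrite ltnS leq_eqVlt => /orP [/eqP ek | hk].
  - have -> : k = Ordinal hm by apply: val_inj.
    by apply: P_mono Pd' _; split=> //; apply: Rmin_r.
  - by apply: P_mono (Pd k hk) _; split=> //; apply: Rmin_l.
Qed.

Lemma fin_bound N (a : 'I_N -> R) : exists C, 1 <= C /\ forall k, a k <= C.
Proof.
  suff /(_ N) [C [C_ge1 HC]] : forall m, exists C, 1 <= C /\ forall k : 'I_N, (k < m)%N -> a k <= C.
    by exists C; split=> // k; apply: HC.
  elim=> [|m [C [C_ge1 HC]]]; first by exists 1; split=> //; lra.
  case: (ltnP m N) => hm; last first.
    by exists C; split=> // k hk; apply: HC; exact: leq_trans (ltn_ord k) hm.
  exists (Rmax C (a (Ordinal hm))); split; first exact: Rle_trans C_ge1 (Rmax_l _ _).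
  move=> k; rewrite ltnS leq_eqVlt => /orP [/eqP ek | hk].
  - have -> : k = Ordinal hm by apply: val_inj.
    exact: Rmax_r.
  - exact: Rle_trans (HC k hk) (Rmax_l _ _).
Qed.

Lemma curve_lipschitz_at0 N (gam : R -> Pt N) (dgam : 'I_N -> R) :
  (forall k, derivable_pt_lim (fun s => gam s k) 0 (dgam k)) ->
  exists C d, 1 <= C /\ 0 < d /\ forall k h, h <> 0 -> Rabs h < d ->
    Rabs (gam h k - gam 0 k) <= C * Rabs h.
Proof.
  move=> dgam_k; have [C [C_ge1 HC]] := fin_bound (fun k => Rabs (dgam k) + 1).
  suff [d [d_gt0 lip]] : exists d, 0 < d /\ forall k h, h <> 0 -> Rabs h < d ->
      Rabs (gam h k - gam 0 k) <= C * Rabs h by exists C, d.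
  apply: (fin_min (P := fun k d => forall h, h <> 0 -> Rabs h < d ->
                                     Rabs (gam h k - gam 0 k) <= C * Rabs h)).
    by move=> k d d' Pd d'_in h h_nz h_lt; apply: Pd => //; lra.
  move=> k; have [d Hd] := dgam_k k 1 Rlt_0_1.
  exists d; split=> [|h h_nz h_lt]; first exact: cond_pos.
  have := Hd h h_nz h_lt; rewrite Rplus_0_l => quot_near.
  have -> : gam h k - gam 0 k = h * ((gam h k - gam 0 k) / h - dgam k) + h * dgam k by field.
  have := Rabs_triang (h * ((gam h k - gam 0 k) / h - dgam k)) (h * dgam k).
  rewrite !Rabs_mult; have := HC k; have := Rabs_pos h; nra.
Qed.

Lemma partial_increment_bound N (f : Pt N -> R) k g y t eps :
  is_partial f k g -> (forall s, Rabs s <= Rabs t -> Rabs (g (shift y k s)) <= eps) ->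
  Rabs (f (shift y k t) - f y) <= eps * Rabs t.
Proof.
  move=> dfg g_le.
  have [c [mvt c_in]] := MVT_abs (fun s => f (shift y k s)) (fun s => g (shift y k s)) 0 t
                                 (fun c _ => is_partial_at dfg y c).
  have c_le : Rabs c <= Rabs t.
    by move: c_in; rewrite /Rmin /Rmax; case: Rle_dec => _ ?; split_Rabs; lra.
  rewrite -{2}(shift0 y k) mvt Rminus_0_r.
  apply: Rmult_le_compat_r; [exact: Rabs_pos | exact: g_le].
Qed.

Definition splice N (z x : Pt N) (m : nat) : Pt N := fun k => if (k < m)%N then z k else x k.

Lemma splice_step N (z x : Pt N) (km : 'I_N) :
  splice z x km.+1 = shift (splice z x km) km (z km - x km).
Proof.
  apply: functional_extensionality => k; rewrite /splice /shift ltnS leq_eqVlt.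
  case: (eqVneq k km) => [-> | k_ne]; first by rewrite eqxx ltnn /=; ring.
  by have /negbTE -> : (k : nat) != km by apply: contra k_ne => /eqP /val_inj ->.
Qed.

Section FlatPoint.
Variables (N : nat) (f : Pt N -> R) (g : 'I_N -> Pt N -> R) (x : Pt N).
Hypothesis dfg : forall i, is_partial f i (g i).
Hypothesis cont_g : forall i, contN (g i).
Hypothesis g_x : forall i, g i x = 0.

Lemma flat_box_estimate eps : 0 < eps -> exists delta, 0 < delta /\
  forall z rho, rho < delta -> (forall k, Rabs (z k - x k) <= rho) ->
    Rabs (f z - f x) <= INR N * eps * rho.
Proof.
  move=> eps_gt0.
  have [d [d_gt0 g_small]] : exists d, 0 < d /\ forall k y,
      (forall k', Rabs (y k' - x k') < d) -> Rabs (g k y) < eps.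
  { apply: (fin_min (P := fun k d => forall y,
                       (forall k', Rabs (y k' - x k') < d) -> Rabs (g k y) < eps)).
    - move=> k d d' Pd [_ d'_le] y near_y; apply: Pd => k'.
      exact: Rlt_le_trans (near_y k') d'_le.
    - move=> k; have [d [d_gt0 Hd]] := cont_g k x eps_gt0.
      by exists d; split=> // y /Hd; rewrite g_x Rminus_0_r. }
  exists d; split=> // z rho rho_lt z_near.
  suff : forall m, (m <= N)%N -> Rabs (f (splice z x m) - f x) <= INR m * eps * rho.
  { have splice_N : splice z x N = z.
      by apply: functional_extensionality => k; rewrite /splice ltn_ord.
    by move/(_ N (leqnn N)); rewrite splice_N. }
  elim=> [|m IH] hm.
  { have -> : splice z x 0 = x by apply: functional_extensionality.
    rewrite Rminus_diag Rabs_R0 /=; lra. }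
  pose km := Ordinal hm.
  have t_le : Rabs (z km - x km) <= rho := z_near km.
  have step : Rabs (f (splice z x m.+1) - f (splice z x m)) <= eps * Rabs (z km - x km).
  { rewrite (splice_step z x km); apply: partial_increment_bound (dfg km) _ => s s_le.
    apply/Rlt_le/g_small => k'; rewrite /shift /splice.
    case: (eqVneq k' km) => [-> | _].
      by rewrite ltnn (_ : x km + s - x km = s); [lra | ring].
    case: (k' < km)%N; last (rewrite Rminus_diag Rabs_R0; lra).
    exact: Rle_lt_trans (z_near k') rho_lt. }
  have := IH (ltnW hm); have := Rabs_triang (f (splice z x m.+1) - f (splice z x m))
                                             (f (splice z x m) - f x).
  have -> : f (splice z x m.+1) - f (splice z x m) + (f (splice z x m) - f x) =
            f (splice z x m.+1) - f x by ring.
  rewrite S_INR; nra.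
Qed.

(* Chain rule at a flat point: along any curve through x that is
   differentiable at 0, f has derivative 0.  Indeed the curve stays in a box of
   radius C |h| around x, on which f moves by o(|h|). *)
Lemma flat_curve_derivative (gam : R -> Pt N) (dgam : 'I_N -> R) :
  gam 0 = x -> (forall k, derivable_pt_lim (fun s => gam s k) 0 (dgam k)) ->
  derivable_pt_lim (fun s => f (gam s)) 0 0.
Proof.
  move=> gam0 dgam_k eps eps_gt0.
  have [C [d1 [C_ge1 [d1_gt0 gam_lip]]]] := curve_lipschitz_at0 dgam_k.
  rewrite gam0 in gam_lip.
  have NC_gt0 : 0 < 2 * (INR N + 1) * C by have := pos_INR N; nra.
  have e'_gt0 : 0 < eps / (2 * (INR N + 1) * C) by apply: Rdiv_lt_0_compat.
  have [d2 [d2_gt0 f_est]] := flat_box_estimate e'_gt0.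
  have d_gt0 : 0 < Rmin d1 (d2 / C) by apply: Rmin_pos => //; apply: Rdiv_lt_0_compat; lra.
  exists (mkposreal _ d_gt0) => h h_nz /= h_lt.
  have h_gt0 : 0 < Rabs h by apply: Rabs_pos_lt.
  have hC_lt : C * Rabs h < d2.
  { have := Rmult_lt_compat_l C _ _ ltac:(lra) (Rlt_le_trans _ _ _ h_lt (Rmin_r _ _)).
    by have -> : C * (d2 / C) = d2 by field; lra. }
  have est := f_est (gam h) (C * Rabs h) hC_lt
                (fun k => gam_lip k h h_nz (Rlt_le_trans _ _ _ h_lt (Rmin_l _ _))).
  rewrite Rplus_0_l gam0 Rminus_0_r /Rdiv Rabs_mult Rabs_inv.
  apply: (Rmult_lt_reg_r (Rabs h)) => //.
  rewrite Rmult_assoc Rinv_l ?Rmult_1_r; last lra.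
  apply: Rle_lt_trans est _.
  have -> : INR N * (eps / (2 * (INR N + 1) * C)) * (C * Rabs h) =
            eps * Rabs h * (INR N / (2 * (INR N + 1))) by field; have := pos_INR N; lra.
  have ratio_lt1 : INR N / (2 * (INR N + 1)) < 1.
  { have := pos_INR N => N_ge0; apply: (Rmult_lt_reg_r (2 * (INR N + 1))); first lra.
    field_simplify; lra. }
  have := Rmult_lt_0_compat _ _ eps_gt0 h_gt0; nra.
Qed.

End FlatPoint.

Definition has_partials2 N (f : Pt N -> R) (D H : 'I_N -> Pt N -> R) : Prop :=
  forall i, is_partial f i (D i) /\ is_partial (D i) i (H i).

Definition box n (H : 'I_n.+1 -> Pt n.+1 -> R) (x : Pt n.+1) : R :=
  sumR n (fun k => H (inord k) x) - H ord_max x.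

Definition grad N (D : 'I_N -> Pt N -> R) (x : Pt N) : Pt N := fun j => D j x.

(* [wave_zero] quantifies over all choices of partial derivatives; since these
   are unique, it suffices to test one. *)
Lemma wave_zero_box n (phi : Pt n.+1 -> R) D H :
  has_partials2 phi D H -> (wave_zero phi <-> forall x, box H x = 0).
Proof.
  move=> dphi; split=> [wave x | box0 D' H' dD' dH' x].
  - exact: wave (fun i => (dphi i).1) (fun i => (dphi i).2) x.
  - have eD : D' = D.
      by apply: functional_extensionality => i; exact: is_partial_uniq (dD' i) (dphi i).1.
    have eH : H' = H.
      by apply: functional_extensionality => i; apply: is_partial_uniq (dphi i).2; rewrite -eD.
    by have := box0 x; rewrite eH.
Qed.

Lemma partials2_plus N (f g : Pt N -> R) Df Hf Dg Hg :
  has_partials2 f Df Hf -> has_partials2 g Dg Hg ->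
  has_partials2 (fun x => f x + g x) (fun i x => Df i x + Dg i x) (fun i x => Hf i x + Hg i x).
Proof.
  move=> df dg i; have [df1 df2] := df i; have [dg1 dg2] := dg i.
  by split; apply: is_partial_plus.
Qed.

Lemma partials2_mult N (f g : Pt N -> R) Df Hf Dg Hg :
  has_partials2 f Df Hf -> has_partials2 g Dg Hg ->
  has_partials2 (fun x => f x * g x) (fun i x => Df i x * g x + f x * Dg i x)
    (fun i x => Hf i x * g x + Df i x * Dg i x + (Df i x * Dg i x + f x * Hg i x)).
Proof.
  move=> df dg i; have [df1 df2] := df i; have [dg1 dg2] := dg i.
  by split; [apply: is_partial_mult | apply: is_partial_plus; apply: is_partial_mult].
Qed.

Lemma partials2_proj N (a : 'I_N) :
  has_partials2 (fun y => y a) (fun i _ => basis_vec a i) (fun _ _ => 0).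
Proof. by move=> i; split; [exact: is_partial_proj | exact: is_partial_const]. Qed.

Lemma box_plus n (A B : 'I_n.+1 -> Pt n.+1 -> R) x :
  box (fun i x => A i x + B i x) x = box A x + box B x.
Proof. rewrite /box sumR_plus; ring. Qed.

Lemma box_mult n (f g : Pt n.+1 -> R) Df Hf Dg Hg x :
  box (fun i x => Hf i x * g x + Df i x * Dg i x + (Df i x * Dg i x + f x * Hg i x)) x =
  g x * box Hf x + f x * box Hg x + 2 * mink (grad Df x) (grad Dg x).
Proof.
  rewrite /box /mink /grad.
  have -> : forall m, sumR m (fun k => Hf (inord k) x * g x + Df (inord k) x * Dg (inord k) x +
                                 (Df (inord k) x * Dg (inord k) x + f x * Hg (inord k) x)) =
      g x * sumR m (fun k => Hf (inord k) x) + f x * sumR m (fun k => Hg (inord k) x) +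
      2 * sumR m (fun k => Df (inord k) x * Dg (inord k) x).
    by elim=> [|m IH] /=; [ring | rewrite IH; ring].
  ring.
Qed.

Lemma wave_zero_pairing n (f1 g1 f2 g2 : Pt n.+1 -> R) Df1 Hf1 Dg1 Hg1 Df2 Hf2 Dg2 Hg2 :
  has_partials2 f1 Df1 Hf1 -> has_partials2 g1 Dg1 Hg1 ->
  has_partials2 f2 Df2 Hf2 -> has_partials2 g2 Dg2 Hg2 ->
  (forall x, box Hf1 x = 0) -> (forall x, box Hg1 x = 0) ->
  (forall x, box Hf2 x = 0) -> (forall x, box Hg2 x = 0) ->
  (wave_zero (fun x => f1 x * g1 x + f2 x * g2 x) <->
   forall x, mink (grad Df1 x) (grad Dg1 x) + mink (grad Df2 x) (grad Dg2 x) = 0).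
Proof.
  move=> df1 dg1 df2 dg2 wf1 wg1 wf2 wg2.
  rewrite (wave_zero_box (partials2_plus (partials2_mult df1 dg1) (partials2_mult df2 dg2))).
  split=> wave x; have := wave x; rewrite box_plus !box_mult wf1 wg1 wf2 wg2; lra.
Qed.

Lemma box_proj n (x : Pt n.+1) : box (fun (_ : 'I_n.+1) _ => 0) x = 0.
Proof. by rewrite /box sumR_zero; ring. Qed.

Lemma wave_zero_proj n (a : 'I_n.+1) : wave_zero (fun y => y a).
Proof. exact/(wave_zero_box (partials2_proj a))/box_proj. Qed.

Lemma wave_zero_coord_quadratic n (a b c d : 'I_n.+1) :
  mink (basis_vec a) (basis_vec b) + mink (basis_vec c) (basis_vec d) = 0 ->
  wave_zero (fun y : Pt n.+1 => y a * y b + y c * y d).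
Proof.
  move=> orth.
  by apply/(wave_zero_pairing (partials2_proj a) (partials2_proj b) (partials2_proj c)
                              (partials2_proj d)); try exact: box_proj.
Qed.

Section WavePreservingDiffeo.
Variables (n : nat) (F G : Pt n.+1 -> Pt n.+1).
Hypothesis smooth_F : smooth_map F.
Hypothesis smooth_G : smooth_map G.
Hypothesis GF : forall x, G (F x) = x.
Hypothesis FG : forall y, F (G y) = y.
Hypothesis hwave : forall phi : Pt n.+1 -> R, smooth phi ->
  (wave_zero phi <-> wave_zero (fun y => phi (G y))).
Variable J : 'I_n.+1 -> 'I_n.+1 -> Pt n.+1 -> R.
Hypothesis hJ : forall i j, is_partial (fun x => F x i) j (J i j).

Lemma component_partials2 a : exists H, has_partials2 (fun x => F x a) (J a) H.
Proof.
  have [H dH] : exists H, forall i, is_partial (J a i) i (H i).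
  { apply: (functional_choice (fun i h => is_partial (J a i) i h)) => i.
    exact: (C2_partial (smooth_F a 2%N) (hJ a i)).2. }
  by exists H => i; split.
Qed.

(* Each new coordinate y_a = F_a solves the wave equation in x, because y_a is
   a coordinate function in y. *)
Lemma component_box a H : has_partials2 (fun x => F x a) (J a) H -> forall x, box H x = 0.
Proof.
  move=> dFa; apply/(wave_zero_box dFa)/(hwave (smooth_F a)).
  have -> : (fun y => F (G y) a) = (fun y => y a).
    by apply: functional_extensionality => y; rewrite FG.
  exact: wave_zero_proj.
Qed.

Lemma jacobian_pairing a b c d :
  mink (basis_vec a) (basis_vec b) + mink (basis_vec c) (basis_vec d) = 0 ->
  forall x, mink (grad (J a) x) (grad (J b) x) + mink (grad (J c) x) (grad (J d) x) = 0.
Proof.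
  move=> orth.
  have [[Ha dFa] [Hb dFb]] := (component_partials2 a, component_partials2 b).
  have [[Hc dFc] [Hd dFd]] := (component_partials2 c, component_partials2 d).
  apply/(wave_zero_pairing dFa dFb dFc dFd); try exact: component_box.
  apply/(hwave (smooth_plus (smooth_mult (smooth_F a) (smooth_F b))
                            (smooth_mult (smooth_F c) (smooth_F d)))).
  have -> : (fun y => F (G y) a * F (G y) b + F (G y) c * F (G y) d) =
            (fun y => y a * y b + y c * y d).
    by apply: functional_extensionality => y; rewrite FG.
  exact: wave_zero_coord_quadratic.
Qed.

Lemma flat_along_inverse_line (f : Pt n.+1 -> R) Df x jj :
  (forall i, is_partial f i (Df i)) -> (forall i, contN (Df i)) -> (forall i, Df i x = 0) ->
  derivable_pt_lim (fun s => f (G (shift (F x) jj s))) 0 0.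
Proof.
  move=> df cont_Df flat.
  have [dgam dgam_k] : exists dgam : 'I_n.+1 -> R,
      forall k, derivable_pt_lim (fun s => G (shift (F x) jj s) k) 0 (dgam k).
  { apply: (functional_choice
             (fun k l => derivable_pt_lim (fun s => G (shift (F x) jj s) k) 0 l)) => k.
    have [_ dGk] := smooth_G k 1%N.
    by have [g [dGg _]] := dGk jj; exists (g (F x)); exact: dGg. }
  apply: (flat_curve_derivative df cont_Df flat _ dgam_k).
  by rewrite shift0 GF.
Qed.

(* Two distinct rows of the Jacobian are linearly independent: otherwise the
   corresponding combination of y_a and y_b would be flat at x, while as a
   function of y it is a nonzero linear form. *)
Lemma jacobian_rows_independent (a b : 'I_n.+1) u0 u1 x : a != b ->
  (forall j, u0 * J a j x + u1 * J b j x = 0) -> u0 = 0 /\ u1 = 0.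
Proof.
  move=> ab comb0.
  have dcomb j : is_partial (fun z => u0 * F z a + u1 * F z b) j
                            (fun z => u0 * J a j z + u1 * J b j z).
    by apply: is_partial_plus; apply: is_partial_scal.
  have cont_comb j : contN (fun z => u0 * J a j z + u1 * J b j z).
    by apply: contN_plus; apply: contN_mult (contN_const _) _;
       exact: (C2_partial (smooth_F _ 2%N) (hJ _ j)).1.
  have coef jj : u0 * basis_vec a jj + u1 * basis_vec b jj = 0.
  { have flat := flat_along_inverse_line jj dcomb cont_comb comb0.
    have lin := is_partial_plus (is_partial_scal u0 (is_partial_proj a jj))
                                (is_partial_scal u1 (is_partial_proj b jj)) (F x).
    have on_line : (fun s => u0 * F (G (shift (F x) jj s)) a + u1 * F (G (shift (F x) jj s)) b) =
                   (fun s => u0 * shift (F x) jj s a + u1 * shift (F x) jj s b).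
      by apply: functional_extensionality => s; rewrite FG.
    rewrite on_line in flat.
    exact: uniqueness_limite lin flat. }
  have := coef a; have := coef b; rewrite /basis_vec !eqxx (negbTE ab) eq_sym (negbTE ab).
  by move=> coef_b coef_a; split; lra.
Qed.

End WavePreservingDiffeo.

Unset Implicit Arguments. Set Strict Implicit.

Theorem theorem2p1 (n : nat) (hn : (2 <= n)%N)
  (F G : Pt n.+1 -> Pt n.+1) (hF : diffeo_with_inv F G)
  (hwave : forall phi : Pt n.+1 -> R, smooth phi ->
     (wave_zero phi <-> wave_zero (fun y => phi (G y))))
  (J : 'I_n.+1 -> 'I_n.+1 -> Pt n.+1 -> R)
  (hJ : forall i j, is_partial (fun x => F x i) j (J i j)) :
  forall x : Pt n.+1,
    let r := fun i : 'I_n.+1 => (fun j : 'I_n.+1 => J i j x) in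
    (forall i j : 'I_n.+1, i != j -> mink (r i) (r j) = 0) /\
    (forall i : 'I_n.+1, (i < n)%N -> mink (r i) (r i) = - mink (r ord_max) (r ord_max)) /\
    (forall i : 'I_n.+1, (i < n)%N -> spacelike (r i)) /\
    timelike (r ord_max).
Proof.
  move: hF => [smooth_F [smooth_G [GF FG]]] x r.
  have pairing := jacobian_pairing smooth_F FG hwave hJ.
  have orth : forall i j : 'I_n.+1, i != j -> mink (r i) (r j) = 0.
  { move=> i j ij; have := pairing i j i j ltac:(rewrite mink_basis_neq //; ring) x.
    rewrite /r /grad; lra. }
  have same_length : forall i : 'I_n.+1, (i < n)%N ->
      mink (r i) (r i) = - mink (r ord_max) (r ord_max).
  { move=> i hi; have := pairing i i ord_max ord_max
      ltac:(rewrite mink_basis_space // mink_basis_time; ring) x.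
    rewrite /r /grad; lra. }
  (* r_{n+1} is timelike: otherwise two spatial rows, being orthogonal of equal
     nonpositive square, would be linearly dependent. *)
  have time : mink (r ord_max) (r ord_max) < 0.
  { apply: Rnot_le_lt => time_ge0.
    have [i0 [i1 [i01 hi0 hi1]]] := two_spatial_indices hn.
    have [u0 [u1 [u_nz dep]]] := orth_pair_dependent (orth i0 i1 i01)
      (same_length i0 hi0) (same_length i1 hi1) ltac:(lra).
    have [u0_0 u1_0] := jacobian_rows_independent smooth_F smooth_G GF FG hJ i01 dep.
    by case: u_nz. }
  split=> //; split=> //; split=> // i hi; left.
  by rewrite same_length //; lra.
Qed.
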